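(* Let $n\ge1$ and let $\mathbf{u}_0,\dots,\mathbf{u}_n$ be linearly independent unit vectors in $\mathbf{C}^{n+1}$, regarded as the vertices $[\mathbf{u}_0],\dots,[\mathbf{u}_n]$ of a projective simplex in $\mathbf{CP}^n$. For each $j=0,\dots,n$ let $d_j$ be the Fubini–Study distance from $[\mathbf{u}_j]$ to the hyperplane $\{[\mathbf{x}]:\mathbf{x}\in\operatorname{span}(\mathbf{u}_i:i\ne j)\setminus\{0\}\}$ containing the opposite face, and let $d_{\min}=\min_j d_j$. Then $$d_{\min}^n\le|\det(\mathbf{u}_0,\dots,\mathbf{u}_n)|.$$ Moreover, if equality holds, then at least $n$ of the $n+1$ distances $d_0,\dots,d_n$ equal $d_{\min}$.
   Context: The dot product on $\mathbf{C}^{n+1}$ is the bilinear form $\mathbf{a}\cdot\mathbf{b}=\sum_i a_ib_i$ (standard basis $\mathbf{e}_0,\dots,\mathbf{e}_n$), and $|\mathbf{a}|^2=\mathbf{a}\cdot\overline{\mathbf{a}}$. On $\Lambda^k\mathbf{C}^{n+1}$ the basis $\mathbf{e}_{i_1}\wedge\dots\wedge\mathbf{e}_{i_k}$ ($i_1<\dots<i_k$) is declared orthonormal, giving a norm $|\omega|^2=\omega\cdot\overline\omega$. $\mathbf{CP}^n$ is the set of classes $[\mathbf{v}]$ of nonzero vectors of $\mathbf{C}^{n+1}$ modulo nonzero scalars. The Fubini–Study distance between points represented by unit vectors $\mathbf{v},\mathbf{w}$ is $|\mathbf{v}\wedge\mathbf{w}|$; the distance from a point $[\mathbf{u}]$ ($|\mathbf{u}|=1$)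 to a hyperplane $H$ is the minimum of $|\mathbf{u}\wedge\mathbf{x}|$ over unit vectors $\mathbf{x}$ with $[\mathbf{x}]\in H$. $\det(\mathbf{u}_0,\dots,\mathbf{u}_n)$ is the determinant of the matrix with these rows. *)

From HB Require Import structures.
From mathcomp Require Import all_boot all_order all_algebra.
Set Implicit Arguments. Unset Strict Implicit. Unset Printing Implicit Defensive.
Import Order.TTheory GRing.Theory Num.Theory.
Local Open Scope ring_scope.

(* Vectors of C^(m) are row vectors 'rV[C]_m; C is any numClosedFieldType
   (a complexified real closed field). *)

Definition hnorm2 (C : numClosedFieldType) (m : nat) (a : 'rV[C]_m) : C :=
  \sum_(i < m) a 0 i * (a 0 i)^*.

Definition unitv (C : numClosedFieldType) (m : nat) (a : 'rV[C]_m) : Prop :=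
  hnorm2 a = 1.

(* |v /\ w|^2 in the orthonormal basis e_i /\ e_j (i < j) of Lambda^2 C^m *)
Definition wedge_norm2 (C : numClosedFieldType) (m : nat) (v w : 'rV[C]_m) : C :=
  \sum_(i < m) \sum_(j < m | (i < j)%N)
     (v 0 i * w 0 j - v 0 j * w 0 i) * (v 0 i * w 0 j - v 0 j * w 0 i)^*.

(* Fubini--Study distance between points represented by unit vectors *)
Definition fs_dist (C : numClosedFieldType) (m : nat) (v w : 'rV[C]_m) : C :=
  sqrtC (wedge_norm2 v w).

Definition in_face (C : numClosedFieldType) (m : nat)
    (u : 'I_m -> 'rV[C]_m) (j : 'I_m) (x : 'rV[C]_m) : Prop :=
  exists c : 'I_m -> C, c j = 0 /\ x = \sum_(i < m) c i *: u i.

Definition is_face_dist (C : numClosedFieldType) (m : nat)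
    (u : 'I_m -> 'rV[C]_m) (j : 'I_m) (d : C) : Prop :=
  (exists x, unitv x /\ in_face u j x /\ fs_dist (u j) x = d) /\
  (forall x, unitv x -> in_face u j x -> d <= fs_dist (u j) x).

Definition rowsmx (C : numClosedFieldType) (m : nat) (u : 'I_m -> 'rV[C]_m)
  : 'M[C]_m := \matrix_(i < m, k < m) u i 0 k.

From HB Require Import structures.
From mathcomp Require Import all_boot all_order all_algebra.
From mathcomp Require Import sesquilinear spectral ring.
Import Order.TTheory GRing.Theory Num.Theory Num.Def.
Local Open Scope ring_scope.
Local Open Scope sesquilinear_scope.
Set Implicit Arguments. Unset Strict Implicit. Unset Printing Implicit Defensive.

(* Gram-Schmidt on the rows gives u_i = sum_(k <= i) R_ik b_k with (b_k) orthonormal and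
   R lower triangular with nonnegative diagonal, so |det(u_0, ..., u_n)| = prod_i R_ii, and
   R_00 = 1 because u_0 is a unit vector.  For i >= 1 the face opposite u_i contains
   span(b_k : k < i); writing u_i = p + R_ii b_i with p in that span, the unit vector along p
   (or any b_k, k < i, if p = 0) lies at Fubini-Study distance sqrt(1 - |p|^2) = R_ii from
   [u_i].  Hence d_i <= R_ii for i >= 1, so d_min^n <= prod_(i >= 1) R_ii = |det|, and
   equality forces d_i = d_min for every i >= 1. *)

Lemma sum_pairs_sym (V : nmodType) m (f : 'I_m -> 'I_m -> V) :
    (forall i j, f i j = f j i) -> (forall i, f i i = 0) ->
  \sum_(i < m) \sum_(j < m) f i j = (\sum_(i < m) \sum_(j < m | (i < j)%N) f i j) *+ 2.
Proof.
move=> fC f0.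
rewrite [in RHS](eq_bigr _ (fun i _ => big_mkcond _ _)) /=.
rewrite mulr2n [X in _ + X]exchange_big /= -big_split /=.
apply: eq_bigr => i _; rewrite -big_split /=.
apply: eq_bigr => j _; rewrite [f j i]fC.
by case: ltngtP => [||/val_inj->]; rewrite ?addr0 ?add0r ?f0.
Qed.

Lemma ler_prod_eq (R : numDomainType) (I : finType) (P : pred I) (E1 E2 : I -> R) :
    (forall i, P i -> 0 < E1 i <= E2 i) ->
    \prod_(i | P i) E1 i = \prod_(i | P i) E2 i ->
  forall i, P i -> E1 i = E2 i.
Proof.
move=> leE12 eq_prod i Pi; have /andP [E1i_gt0 le_i] := leE12 i Pi.
have [//|ne_i] := eqVneq (E1 i) (E2 i).
have lt_i : E1 i < E2 i by rewrite lt_def eq_sym ne_i le_i.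
have : \prod_(j | P j) E1 j < \prod_(j | P j) E2 j.
  rewrite (bigD1 i Pi) [X in _ < X](bigD1 i Pi) /=.
  apply: lt_le_trans (_ : E2 i * \prod_(j | P j && (j != i)) E1 j <= _).
    by rewrite ltr_pM2r // prodr_gt0 // => j /andP [/leE12 /andP []].
  rewrite ler_wpM2l ?(le_trans (ltW E1i_gt0)) // ler_prod // => j /andP [/leE12].
  by case/andP => /ltW -> ->.
by rewrite eq_prod ltxx.
Qed.

Definition supported_below (V : nmodType) m (i : nat) (x : 'rV[V]_m) :=
  forall k : 'I_m, (i <= k)%N -> x 0 k = 0.

Lemma trig_row_decomp (R : pzRingType) m (T : 'M[R]_m) (i : 'I_m) :
  is_trig_mx T -> exists2 p, supported_below i p & row i T = p + T i i *: 'e_i.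
Proof.
move=> /is_trig_mxP T_trig; exists (row i T - T i i *: 'e_i); last by rewrite subrK.
move=> k ik; rewrite !mxE eqxx /=; case: eqP => [->|/eqP ki]; first by rewrite mulr1 subrr.
rewrite T_trig ?mulr0 ?subrr // ltn_neqAle ik andbT.
by apply: contra_neq ki => /val_inj.
Qed.

Lemma supported_below_trig_mulmx (R : idomainType) m (T : 'M[R]_m) (c : 'rV[R]_m) i :
    is_trig_mx T -> (forall k, T k k != 0) ->
  supported_below i (c *m T) -> supported_below i c.
Proof.
move=> /is_trig_mxP T_trig T_diag cT k; have [l] := ubnP (m - k).
elim: l k => // l IHl k /[!ltnS] le_mk_l ik.
have := cT k ik; rewrite mxE (bigD1 k) //= big1 ?addr0 => [/eqP|j /negPf jk].
  by rewrite mulf_eq0 (negPf (T_diag k)) orbF => /eqP.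
case: (ltngtP j k) => [jk'|kj|/val_inj/eqP]; last by rewrite jk.
- by rewrite T_trig ?mulr0.
- rewrite IHl ?mul0r ?(leq_trans ik (ltnW kj)) //.
  exact: leq_trans (ltn_sub2l (ltn_ord k) kj) le_mk_l.
Qed.

Section DotProduct.
Variable C : numClosedFieldType.
Local Notation "''[' u , v ]" := (@dotmx C _ u v).
Local Notation "''[' u ]" := '[u, u].

Lemma dotmxC m (v w : 'rV[C]_m) : '[v, w]^* = '[w, v].
Proof. by rewrite (hermC (@dotmx C m)) expr0 mul1r conjCK. Qed.

Lemma dotmxZl m a (v w : 'rV[C]_m) : '[a *: v, w] = a * '[v, w].
Proof. exact: linearZl_LR. Qed.

Lemma dotmxZr m a (v w : 'rV[C]_m) : '[v, a *: w] = a^* * '[v, w].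
Proof. exact: linearZr_LR. Qed.

Lemma dotmx0l m (v : 'rV[C]_m) : '[0, v] = 0.
Proof. exact: linear0l. Qed.

Lemma dotmx_delta m (v : 'rV[C]_m) k : '[v, 'e_k] = v 0 k.
Proof.
rewrite dotmxE !mxE (bigD1 k) //= big1 => [|j /negPf jk]; rewrite !mxE ?jk /=.
  by rewrite eqxx rmorph1 mulr1 addr0.
by rewrite rmorph0 mulr0.
Qed.

Lemma hnorm2E m (v : 'rV[C]_m) : hnorm2 v = '[v].
Proof. by rewrite dotmxE !mxE; apply: eq_bigr => k _; rewrite !mxE. Qed.

Lemma dotmx_unitary m p (B : 'M[C]_(m, p)) (y z : 'rV[C]_m) :
  B \is unitarymx -> '[y *m B, z *m B] = '[y, z].
Proof.
move=> /unitarymxP BBt; rewrite !dotmxE trmx_mul map_mxM mulmxA.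
by rewrite -[y *m B *m _]mulmxA BBt mulmx1.
Qed.

Lemma wedge_norm2_ge0 m (v w : 'rV[C]_m) : 0 <= wedge_norm2 v w.
Proof. by do 2![apply: sumr_ge0 => ? _]; apply: mul_conjC_ge0. Qed.

Lemma wedge_norm2_lagrange m (v w : 'rV[C]_m) :
  wedge_norm2 v w = '[v] * '[w] - '[v, w] * '[w, v].
Proof.
pose f i j := (v 0 i * w 0 j - v 0 j * w 0 i) * (v 0 i * w 0 j - v 0 j * w 0 i)^*.
pose g i j := v 0 i * (v 0 i)^* * (w 0 j * (w 0 j)^*)
            - v 0 i * (w 0 i)^* * (w 0 j * (v 0 j)^*).
have fg i j : f i j = g i j + g j i.
  by rewrite /f /g rmorphB !rmorphM /=; ring.
have sum_g : \sum_i \sum_j g i j = '[v] * '[w] - '[v, w] * '[w, v].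
  rewrite !dotmxE !mxE !mulr_suml -sumrB; apply: eq_bigr => i _.
  by rewrite !mxE !mulr_sumr -sumrB; apply: eq_bigr => j _; rewrite !mxE.
have -> : wedge_norm2 v w = \sum_(i < m) \sum_(j < m | (i < j)%N) f i j by [].
apply: (@pmulrnI _ 2) => //; rewrite -sum_pairs_sym; last 2 first.
- by move=> i j; rewrite /f -opprB rmorphN mulrNN.
- by move=> i; rewrite /f subrr mul0r.
under eq_bigr do under eq_bigr do rewrite fg.
rewrite mulr2n -{1}sum_g -sum_g [X in _ = _ + X]exchange_big -big_split /=.
by apply: eq_bigr => i _; rewrite -big_split.
Qed.

Lemma wedge_norm2_unitary m p (B : 'M[C]_(m, p)) (y z : 'rV[C]_m) :
  B \is unitarymx -> wedge_norm2 (y *m B) (z *m B) = wedge_norm2 y z.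
Proof. by move=> B_unitary; rewrite !wedge_norm2_lagrange !dotmx_unitary. Qed.

Lemma exists_aligned_unit m (i : nat) (k0 : 'I_m) (p : 'rV[C]_m) :
    (k0 < i)%N -> supported_below i p ->
  exists xi, [/\ '[xi] = 1, supported_below i xi & '[p, xi] * '[xi, p] = '[p]].
Proof.
move=> k0i p_i; have [->|p_neq0] := eqVneq p 0.
  exists 'e_k0; split.
  - by rewrite dotmx_delta mxE !eqxx.
  - move=> k ik; rewrite mxE eqxx /=; case: eqP => // kk0.
    by rewrite kk0 leqNgt k0i in ik.
  - by rewrite !dotmx0l mul0r.
pose s := sqrtC '[p].
have s_gt0 : 0 < s by rewrite sqrt_dnorm_gt0.
have sV_real : (s^-1)^* = s^-1 by apply/conj_Creal; rewrite realV ger0_real ?ltW.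
have ss : s ^+ 2 = '[p] by rewrite sqrtCK.
have s_neq0 : s != 0 by rewrite gt_eqF.
exists (s^-1 *: p); split.
- by rewrite dotmxZl dotmxZr sV_real -ss; field.
- by move=> k ik; rewrite mxE p_i ?mulr0.
- by rewrite dotmxZl dotmxZr sV_real -ss; field.
Qed.

Lemma dotmx_add_delta m (i : 'I_m) a (p xi : 'rV[C]_m) :
  supported_below i xi -> '[p + a *: 'e_i, xi] = '[p, xi].
Proof.
move=> xi_i; rewrite linearDl /= dotmxZl -[dotmx 'e_i xi]dotmxC dotmx_delta xi_i //.
by rewrite rmorph0 mulr0 addr0.
Qed.

Lemma dnorm_add_delta m (i : 'I_m) a (p : 'rV[C]_m) :
  supported_below i p -> '[p + a *: 'e_i] = '[p] + a * a^*.
Proof.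
move=> p_i; rewrite linearDr /= dotmx_add_delta // dotmxZr dotmx_delta.
by rewrite !mxE p_i //= eqxx mulr1 add0r mulrC.
Qed.
End DotProduct.

Section SchmidtCoordinates.
Variable C : numClosedFieldType.
Local Notation "''[' u , v ]" := (@dotmx C _ u v).
Local Notation "''[' u ]" := '[u, u].

(* The coordinates of the rows of A in the Gram-Schmidt basis: A = schmidt_coord A *m schmidt A
   is the triangular ("LQ") factorization of a square A. *)
Definition schmidt_coord m n (A : 'M[C]_(m, n)) : 'M[C]_m := A *m (schmidt A)^t*.

Variables (m n : nat) (A : 'M[C]_(m, n)).
Hypothesis le_mn : (m <= n)%N.
Local Notation B := (schmidt A).
Local Notation R := (schmidt_coord A).

Lemma schmidt_coordE i k : R i k = '[row i A, row k B].
Proof. by rewrite dotmxE !mxE; apply: eq_bigr => j _; rewrite !mxE. Qed.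

Lemma schmidt_coord_trig : is_trig_mx R.
Proof.
apply/is_trig_mxP => i k ik; rewrite schmidt_coordE.
have /sub_sumsmxP [w ->] := row_schmidt_sub A i.
rewrite linear_sumlz big1 // => k' k'i.
have /sub_rVP [a ->] : (w k' *m <<row k' B>> <= row k' B)%MS.
  by rewrite (submx_trans (submxMl _ _)) ?genmxE.
have /row_unitarymxP Bo := schmidt_unitarymx A le_mn.
by rewrite linearZl_LR /= Bo -val_eqE /= ltn_eqF ?mulr0 // (leq_ltn_trans k'i ik).
Qed.

Lemma schmidt_coord_diag_ge0 i : 0 <= R i i.
Proof. by rewrite schmidt_coordE form1_row_schmidt. Qed.

End SchmidtCoordinates.

Lemma norm_det_unitary (C : numClosedFieldType) m (M : 'M[C]_m) :
  M \is unitarymx -> `|\det M| = 1.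
Proof.
move=> /unitarymxP/(congr1 determinant).
rewrite det_mulmx det_map_mx det_tr det1 => detMMt.
by apply/eqP; rewrite -sqrp_eq1 // normCK detMMt.
Qed.

Section SquareSchmidtCoordinates.
Variables (C : numClosedFieldType) (m : nat) (A : 'M[C]_m).
Local Notation "''[' u , v ]" := (@dotmx C _ u v).
Local Notation "''[' u ]" := '[u, u].
Local Notation B := (schmidt A).
Local Notation R := (schmidt_coord A).

Lemma schmidt_unitary : B \is unitarymx.
Proof. exact: schmidt_unitarymx. Qed.

Lemma schmidt_coordK : R *m B = A.
Proof. exact: mulmxKtV schmidt_unitary _. Qed.

Lemma row_schmidt_coordK i : row i R *m B = row i A.
Proof. by rewrite -row_mul schmidt_coordK. Qed.

Lemma dnorm_row_schmidt_coord i : '[row i R] = '[row i A].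
Proof. by rewrite -(dotmx_unitary _ _ schmidt_unitary) row_schmidt_coordK. Qed.

Lemma norm_det_schmidt_coord : `|\det A| = \prod_i R i i.
Proof.
rewrite -{1}schmidt_coordK det_mulmx normrM (norm_det_unitary schmidt_unitary).
rewrite mulr1 (det_trig (schmidt_coord_trig _ _)) // normr_prod.
by apply: eq_bigr => i _; rewrite ger0_norm ?schmidt_coord_diag_ge0.
Qed.

Lemma schmidt_coord_diag_neq0 i : A \in unitmx -> R i i != 0.
Proof.
rewrite unitmxE unitfE -normr_eq0 norm_det_schmidt_coord.
by apply: contra => Rii0; rewrite (bigD1 i) //= (eqP Rii0) mul0r.
Qed.

End SquareSchmidtCoordinates.

Section FaceDistance.
Variables (C : numClosedFieldType) (n : nat) (u : 'I_n.+1 -> 'rV[C]_n.+1).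
Local Notation "''[' u , v ]" := (@dotmx C _ u v).
Local Notation "''[' u ]" := '[u, u].
Local Notation A := (rowsmx u).
Local Notation B := (schmidt A).
Local Notation R := (schmidt_coord A).

Let R_trig : is_trig_mx R := schmidt_coord_trig A (leqnn n.+1).

Lemma row_rowsmx i : row i A = u i.
Proof. by apply/rowP => k; rewrite !mxE. Qed.

Lemma face_dist_ge0 i d : is_face_dist u i d -> 0 <= d.
Proof. by move=> [[x [_ [_ <-]]] _]; rewrite sqrtC_ge0 wedge_norm2_ge0. Qed.

Hypothesis u_unit : forall i, unitv (u i).

Lemma dnorm_row_schmidt_coord_rowsmx i : '[row i R] = 1.
Proof. by rewrite dnorm_row_schmidt_coord row_rowsmx -hnorm2E u_unit. Qed.

Lemma schmidt_coord00 : R ord0 ord0 = 1.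
Proof.
have [p p0 rowR0] := trig_row_decomp ord0 R_trig.
have dnorm_p : '[p] = 0.
  have -> : p = 0 by apply/rowP => k; rewrite p0 ?mxE.
  exact: dotmx0l.
have /eqP := dnorm_row_schmidt_coord_rowsmx ord0.
rewrite rowR0 dnorm_add_delta // dnorm_p add0r.
have R00_ge0 := schmidt_coord_diag_ge0 A ord0.
by rewrite conj_Creal ?ger0_real // -expr2 sqrp_eq1 // => /eqP.
Qed.

Lemma norm_det_rowsmx : `|\det A| = \prod_(i < n) R (lift ord0 i) (lift ord0 i).
Proof. by rewrite norm_det_schmidt_coord big_ord_recl schmidt_coord00 mul1r. Qed.

Hypothesis u_free : row_free A.

Let A_unit : A \in unitmx. Proof. by rewrite -row_free_unit. Qed.

Lemma in_face_schmidt (i : 'I_n.+1) xi : supported_below i xi -> in_face u i (xi *m B).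
Proof.
move=> xi_i; pose c := xi *m B *m invmx A.
have cA : c *m A = xi *m B by rewrite mulmxKV.
have cR : c *m R = xi by rewrite /schmidt_coord mulmxA cA mulmxtVK ?schmidt_unitary.
have c_i : supported_below i c.
  apply: (supported_below_trig_mulmx R_trig); last by rewrite cR.
  by move=> k; apply: schmidt_coord_diag_neq0.
exists (c 0); split; first exact: c_i.
by rewrite -cA mulmx_sum_row; apply: eq_bigr => k _; rewrite row_rowsmx.
Qed.

Lemma face_dist_le_schmidt_coord (i : 'I_n.+1) d :
  (0 < i)%N -> is_face_dist u i d -> d <= R i i.
Proof.
move=> i_gt0 [_ d_min].
have [p p_i rowRi] := trig_row_decomp i R_trig.
have [xi [xi_unit xi_i xi_p]] := exists_aligned_unit (k0 := ord0) i_gt0 p_i.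
have Rii_ge0 := schmidt_coord_diag_ge0 A i.
have norm_p : '[p] = 1 - R i i ^+ 2.
  rewrite -(dnorm_row_schmidt_coord_rowsmx i) rowRi dnorm_add_delta //.
  by rewrite conj_Creal ?ger0_real // addrK.
apply: le_trans (d_min (xi *m B) _ (in_face_schmidt xi_i)) _.
  by rewrite /unitv hnorm2E dotmx_unitary ?schmidt_unitary.
rewrite /fs_dist -row_rowsmx -row_schmidt_coordK wedge_norm2_unitary ?schmidt_unitary //.
rewrite wedge_norm2_lagrange dnorm_row_schmidt_coord_rowsmx xi_unit mul1r.
rewrite rowRi -[dotmx xi _]dotmxC !(dotmx_add_delta _ _ xi_i) dotmxC xi_p norm_p.
by rewrite opprB addrC subrK sqrCK.
Qed.

End FaceDistance.

Theorem mainTheorem8 (C : numClosedFieldType) (n : nat) (hn : (1 <= n)%N)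
    (u : 'I_n.+1 -> 'rV[C]_n.+1)
    (hunit : forall i, unitv (u i))
    (hind : row_free (rowsmx u))
    (d : 'I_n.+1 -> C)
    (hd : forall j, is_face_dist u j (d j))
    (dmin : C)
    (hmin1 : exists j, d j = dmin)
    (hmin2 : forall j, dmin <= d j) :
  dmin ^+ n <= `|\det (rowsmx u)| /\
  (dmin ^+ n = `|\det (rowsmx u)| -> (n <= #|[set j | d j == dmin]|)%N).
Proof.
set R := schmidt_coord (rowsmx u).
have d_le i : d (lift ord0 i) <= R (lift ord0 i) (lift ord0 i).
  by apply: (face_dist_le_schmidt_coord hunit hind _ (hd _)); rewrite lift0.
have dmin_ge0 : 0 <= dmin by have [j <-] := hmin1; apply: face_dist_ge0 (hd j).
have det_eq := norm_det_rowsmx hunit.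
have pow_eq : dmin ^+ n = \prod_(i < n) dmin by rewrite prodr_const card_ord.
split => [|eq_det].
  rewrite det_eq pow_eq ler_prod // => i _.
  by rewrite dmin_ge0 (le_trans (hmin2 _) (d_le i)).
have dmin_gt0 : 0 < dmin.
  rewrite lt_def dmin_ge0 andbT; apply: contraTneq hind => dmin0.
  rewrite row_free_unit unitmxE unitfE -normr_eq0 -eq_det dmin0 expr0n.
  by rewrite eqn0Ngt hn eqxx.
have R_eq i : dmin = R (lift ord0 i) (lift ord0 i).
  rewrite pow_eq det_eq in eq_det; apply: (ler_prod_eq _ eq_det) => // j _.
  by rewrite dmin_gt0 (le_trans (hmin2 _) (d_le j)).
have d_eq i : d (lift ord0 i) = dmin.
  by apply/eqP; rewrite eq_le hmin2 [X in _ <= X](R_eq i) d_le.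
apply: leq_trans (subset_leq_card (_ : [set~ ord0] \subset _)).
  by rewrite cardsC1 card_ord.
apply/subsetP => j; rewrite !inE eq_sym => /unlift_some [i -> _].
by rewrite d_eq.
Qed.
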